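(* In the quasitriangular Hopf algebra $U_q(H_1,H_2,X^\pm)$ with universal $R$-matrix $\mathcal R=\sum_i a_i\otimes b_i$ as in the context, let $u=\sum_i S(b_i)a_i$, $z=u\,S(u)$ and $r=u\,(S(u))^{-1}$. Then, with $E=K_2X^+$, $F=K_2^{-1}X^-$, $$u=e^{i\frac{\pi}{4}H_2^2}q^{-\frac14(H_1^2-H_2^2)}\left(1+(1-q^2)K_1^{-1}K_2^{-1}FE\right),\qquad S(u)=e^{i\frac{\pi}{4}H_2^2}q^{-\frac14(H_1^2-H_2^2)}\left(1+(1-q^2)EFK_1K_2\right),$$ $$z=e^{i\frac{\pi}{2}H_2^2}q^{-\frac12(H_1^2-H_2^2)}\left(1+(1-q^2)(K_1K_2EF+K_1^{-1}K_2^{-1}FE)\right),\qquad r=e^{-i\pi H_2}q^{-(H_1+H_2)}.$$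
   Context: $q$ is a deformation parameter and exponentials of the generators are understood formally. Set $K_1=q^{H_1/2}$, $K_2=e^{i\frac{\pi}{2}H_2}q^{H_2/2}$. $U_q(H_1,H_2,X^\pm)$ is the Hopf algebra generated by $H_1,H_2,X^\pm$ with relations $[H_1,H_2]=0$, $[H_1,X^\pm]=\pm2X^\pm$, $[H_2,X^\pm]=\mp2X^\pm$, $[X^+,X^-]=\frac{K_1K_2-K_1^{-1}K_2^{-1}}{q-q^{-1}}$, $(X^\pm)^2=0$; coproduct $\Delta H_i=H_i\otimes1+1\otimes H_i$, $\Delta X^+=X^+\otimes K_1+K_2^{-1}\otimes X^+$, $\Delta X^-=X^-\otimes K_2+K_1^{-1}\otimes X^-$; counit $\varepsilon(H_i)=\varepsilon(X^\pm)=0$; antipode $S(H_i)=-H_i$, $S(X^+)=-qK_1^{-1}K_2X^+$, $S(X^-)=qK_1K_2^{-1}X^-$. Its universal $R$-matrix is $\mathcal{R}=e^{-i\frac{\pi}{4}H_2\otimes H_2}q^{\frac14(H_1\otimes H_1-H_2\otimes H_2)}(1\otimes1+(1-q^2)E\otimes F)$ with $E=K_2X^+$, $F=K_2^{-1}X^-$. *)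

From HB Require Import structures.
From mathcomp Require Import all_boot all_order all_algebra.
From mathcomp Require Import complex.
From mathcomp Require Import reals sequences exp trigo.
Set Implicit Arguments. Unset Strict Implicit. Unset Printing Implicit Defensive.
Import GRing.Theory Num.Theory.
Local Open Scope ring_scope.
Local Open Scope complex_scope.

Definition cexp {R : realType} (z : R[i]) : R[i] :=
  let: a +i* b := z in (expR a * cos b) +i* (expR a * sin b).

(* "Exponentials of the generators are understood formally": an element of   *)
(* the Cartan part is a function phi(H1,H2) of the commuting generators,      *)
(* modelled as a function C -> C -> C (h1, h2); e.g. q^{H1/2} is             *)
(* (h1,h2) |-> exp(hb*h1/2) where q = exp(hb).                                *)
(* By the relations (X^+)^2 = (X^-)^2 = 0 and [X^+,X^-] = ..., every element   *)
(* is uniquely  phi_1(H) + phi_p(H) X^+ + phi_m(H) X^- + phi_pm(H) X^+X^-     *)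
(* (coefficients written on the left); an element of U is the family of the  *)
(* four coefficient functions, indexed by the PBW monomials below.            *)
Inductive mon := M1 | Mp | Mm | Mpm.   (* 1, X^+, X^-, X^+ X^- *)

Section Model.
Variable R : realType.
Variable hb : R[i].

Notation C := (R[i]).
Definition W := C -> C -> C.                       (* functions of (H1,H2) *)
Definition U := mon -> C -> C -> C.
Definition T := mon -> mon -> C -> C -> C -> C -> C.
  (* elements of the completed U (x) U : coefficient of (x (x) y) is a
     function phi(H1(x)1, H2(x)1, 1(x)H1, 1(x)H2) written on the left *)

Definition q : C := cexp hb.
Definition ipi : C := 'i * (pi : R)%:C.

Definition k1 : W := fun h1 h2 => cexp (hb * h1 / 2).
Definition k2 : W := fun h1 h2 => cexp (ipi * h2 / 2) * cexp (hb * h2 / 2).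
Definition cc : W := fun h1 h2 =>
  (k1 h1 h2 * k2 h1 h2 - (k1 h1 h2 * k2 h1 h2)^-1) / (q - q^-1).

Definition msum (f : mon -> C) : C := f M1 + f Mp + f Mm + f Mpm.

(* commutation with Cartan functions:  x phi(H1,H2) = phi(H1+sh1 x,H2+sh2 x) x,
   from [H1,X^+-] = +-2 X^+-, [H2,X^+-] = -+2 X^+- *)
Definition sh1 (x : mon) : C := match x with Mp => -2 | Mm => 2 | _ => 0 end.
Definition sh2 (x : mon) : C := match x with Mp => 2 | Mm => -2 | _ => 0 end.

Definition delta (x z : mon) : C :=
  match x, z with
  | M1, M1 | Mp, Mp | Mm, Mm | Mpm, Mpm => 1
  | _, _ => 0 end.

(* coefficient (a function of H, on the left) of the monomial z in the
   product of monomials x * y, using (X^+-)^2 = 0 and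
   X^- X^+ = X^+ X^- - (K1K2 - K1^-1K2^-1)/(q-q^-1) *)
Definition pb (x y z : mon) : W := fun h1 h2 =>
  match x, y with
  | M1, _ => delta y z
  | _, M1 => delta x z
  | Mp, Mm => delta Mpm z
  | Mm, Mp => delta Mpm z - delta M1 z * cc h1 h2
  | Mm, Mpm => - delta Mm z * cc h1 h2
  | Mpm, Mp => - delta Mp z * cc (h1 - 2) (h2 + 2)
  | Mpm, Mpm => - delta Mpm z * cc (h1 - 2) (h2 + 2)
  | _, _ => 0 end.

Definition umul (a b : U) : U := fun z h1 h2 =>
  msum (fun x => msum (fun y =>
    a x h1 h2 * b y (h1 + sh1 x) (h2 + sh2 x) * pb x y z h1 h2)).
Definition uadd (a b : U) : U := fun z h1 h2 => a z h1 h2 + b z h1 h2.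
Definition uscale (c : C) (a : U) : U := fun z h1 h2 => c * a z h1 h2.
Definition cart (f : W) : U := fun z h1 h2 => delta M1 z * f h1 h2.
Definition basis (x : mon) : U := fun z _ _ => delta x z.
Definition uone : U := cart (fun _ _ => 1).
Definition usum4 (f : mon -> U) : U :=
  uadd (uadd (uadd (f M1) (f Mp)) (f Mm)) (f Mpm).

Definition Xp : U := basis Mp.
Definition Xm : U := basis Mm.
Definition K1 : U := cart k1.
Definition K2 : U := cart k2.
Definition K1inv : U := cart (fun h1 h2 => (k1 h1 h2)^-1).
Definition K2inv : U := cart (fun h1 h2 => (k2 h1 h2)^-1).
Definition Eg : U := umul K2 Xp.
Definition Fg : U := umul K2inv Xm.

(* antipode: S(H_i) = -H_i (so S(phi(H)) = phi(-H)),
   S(X^+) = -q K1^-1 K2 X^+,  S(X^-) = q K1 K2^-1 X^-, anti-multiplicative *)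
Definition Smon (x : mon) : U :=
  match x with
  | M1 => uone
  | Mp => umul (uscale (- q) (umul K1inv K2)) Xp
  | Mm => umul (uscale q (umul K1 K2inv)) Xm
  | Mpm => umul (umul (uscale q (umul K1 K2inv)) Xm)
                (umul (uscale (- q) (umul K1inv K2)) Xp)
  end.
Definition antipode (a : U) : U :=
  usum4 (fun x => umul (Smon x) (cart (fun h1 h2 => a x (- h1) (- h2)))).

Definition tmul (s t : T) : T := fun z w h1 h2 g1 g2 =>
  msum (fun x => msum (fun y => msum (fun x' => msum (fun y' =>
    s x y h1 h2 g1 g2 * t x' y' (h1 + sh1 x) (h2 + sh2 x) (g1 + sh1 y) (g2 + sh2 y)
    * pb x x' z h1 h2 * pb y y' w g1 g2)))).
Definition tadd (s t : T) : T := fun x y h1 h2 g1 g2 => s x y h1 h2 g1 g2 + t x y h1 h2 g1 g2.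
Definition tscale (c : C) (s : T) : T := fun x y h1 h2 g1 g2 => c * s x y h1 h2 g1 g2.
Definition tens (a b : U) : T := fun x y h1 h2 g1 g2 => a x h1 h2 * b y g1 g2.

(* universal R-matrix
   e^{-i pi/4 H2(x)H2} q^{1/4 (H1(x)H1 - H2(x)H2)} (1(x)1 + (1-q^2) E(x)F) *)
Definition Rcart : T := fun x y h1 h2 g1 g2 =>
  delta M1 x * delta M1 y *
  (cexp (- ipi / 4 * (h2 * g2)) * cexp (hb / 4 * (h1 * g1 - h2 * g2))).
Definition Rmat : T :=
  tmul Rcart (tadd (tens uone uone) (tscale (1 - q ^+ 2) (tens Eg Fg))).

(* u = sum_i S(b_i) a_i for R = sum_i a_i (x) b_i : the (continuous) extension
   of a (x) b |-> S(b) a to the completion.  On a term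
   phi(H(x)1, 1(x)H) (x (x) y) = sum_i f_i(H) x (x) g_i(H) y it gives
   sum_i S(y) g_i(-H) f_i(H) x = S(y) phi(H, -H) x. *)
Definition drinfeld_u (t : T) : U :=
  usum4 (fun x => usum4 (fun y =>
    umul (Smon y) (umul (cart (fun h1 h2 => t x y h1 h2 (- h1) (- h2))) (basis x)))).

Definition Gu : W := fun h1 h2 =>
  cexp (ipi / 4 * h2 ^+ 2) * cexp (- hb / 4 * (h1 ^+ 2 - h2 ^+ 2)).
Definition Gz : W := fun h1 h2 =>
  cexp (ipi / 2 * h2 ^+ 2) * cexp (- hb / 2 * (h1 ^+ 2 - h2 ^+ 2)).
Definition Gr : W := fun h1 h2 =>
  cexp (- ipi * h2) * cexp (- hb * (h1 + h2)).

End Model.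

(* Every element of U is written in PBW coordinates phi_1 + phi_+ X^+ + phi_- X^- + phi_+- X^+X^-
   with Cartan coefficients, and the product becomes an explicit table.  Its associativity rests on
   one fact: K1K2 changes sign when (H1,H2) is shifted by (-2,+2), so the Cartan part of [X^+,X^-]
   anticommutes with X^+-.  Only the terms 1(x)1 and E(x)F of R survive in u = sum S(b_i) a_i, and
   the Cartan factor of R evaluated at (H, -H) is the Gaussian e^{i pi/4 H2^2} q^{-(H1^2-H2^2)/4};
   u, S(u), u S(u) and an inverse of S(u) are then computed coordinatewise, all identities reducing
   to identities between exponentials.  Finally u and S(u) differ by the Cartan factor
   r = (K1K2)^{-2}, so u v = r for any inverse v of S(u), by associativity. *)

From Pilot Require Import Defs.
From HB Require Import structures.
From mathcomp Require Import all_boot all_order all_algebra.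
From mathcomp Require Import complex.
From mathcomp Require Import reals sequences exp trigo.
From mathcomp Require Import ring.
From mathcomp Require Import boolp.
Import GRing.Theory Num.Theory.
Local Open Scope ring_scope.

Section ComplexExp.
Context {R : realType}.
Implicit Types (c x y : R[i]).

Lemma cexpD x y : cexp (x + y) = cexp x * cexp y.
Proof.
case: x => a b; case: y => c d; apply/eqP; rewrite eq_complex /=.
by apply/andP; split; apply/eqP; rewrite expRD ?cosD ?sinD; ring.
Qed.

Lemma cexp0 : cexp (0 : R[i]) = 1.
Proof. by apply/eqP; rewrite eq_complex /= expR0 cos0 sin0 mulr1 mulr0 !eqxx. Qed.

Lemma cexp_neq0 x : cexp x != 0.
Proof.
apply/eqP => ex0; have := cexpD x (- x).
by rewrite subrr cexp0 ex0 mul0r => /eqP; rewrite oner_eq0.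
Qed.

Lemma cexpN x : cexp (- x) = (cexp x)^-1.
Proof.
by apply: (mulfI (cexp_neq0 x)); rewrite -cexpD subrr cexp0 mulfV ?cexp_neq0.
Qed.

Lemma cexp_ipi : cexp (ipi R) = -1.
Proof.
apply/eqP; rewrite eq_complex /=.
rewrite ?mul0r ?mulr0 ?mul1r ?subr0 ?addr0 ?add0r ?oppr0 expR0 cospi sinpi.
by rewrite !mul1r !eqxx.
Qed.

(* (e^c)^(x/2): K1 is qhalf hb H1 and K2 is qhalf (i pi + hb) H2. *)
Definition qhalf c x : R[i] := cexp (c * x / 2).

Lemma qhalfD c x y : qhalf c (x + y) = qhalf c x * qhalf c y.
Proof. by rewrite /qhalf -cexpD; congr cexp; ring. Qed.

Lemma qhalfN c x : qhalf c (- x) = (qhalf c x)^-1.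
Proof. by rewrite /qhalf -cexpN; congr cexp; ring. Qed.

Lemma qhalf_neq0 c x : qhalf c x != 0.
Proof. exact: cexp_neq0. Qed.

Lemma qhalf2 c : qhalf c 2 = cexp c.
Proof. by rewrite /qhalf; congr cexp; field. Qed.

Lemma qhalf_sqr c x : qhalf c x ^+ 2 = cexp (c * x).
Proof. by rewrite expr2 -qhalfD /qhalf; congr cexp; field. Qed.

End ComplexExp.

Section Model.
Context {R : realType} (hb : R[i]).
Implicit Types (x y : R[i]).

Local Notation q := (q hb).
Local Notation e1 := (qhalf hb).
Local Notation e2 := (qhalf (ipi R + hb)).

Lemma q_neq0 : q != 0. Proof. exact: cexp_neq0. Qed.

Lemma k1E x y : k1 hb x y = e1 x. Proof. by []. Qed.

Lemma k2E x y : k2 hb x y = e2 y.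
Proof. by rewrite /k2 /qhalf -cexpD; congr cexp; ring. Qed.

Lemma e1_add2 x : e1 (x + 2) = e1 x * q.
Proof. by rewrite qhalfD qhalf2. Qed.

Lemma e1_sub2 x : e1 (x - 2) = e1 x / q.
Proof. by rewrite qhalfD qhalfN qhalf2. Qed.

Lemma e2_add2 x : e2 (x + 2) = - e2 x * q.
Proof. by rewrite qhalfD qhalf2 cexpD cexp_ipi -/(Defs.q hb); ring. Qed.

Lemma e2_sub2 x : e2 (x - 2) = - e2 x / q.
Proof. by rewrite qhalfD qhalfN qhalf2 cexpD cexp_ipi mulN1r invrN -/(Defs.q hb); ring. Qed.

Lemma Gu_neq0 x y : Gu hb x y != 0.
Proof. by rewrite mulf_neq0 ?cexp_neq0. Qed.

Lemma GuN x y : Gu hb (- x) (- y) = Gu hb x y.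
Proof. by rewrite /Gu !sqrrN. Qed.

Lemma Gu_add2_sub2 x y :
  Gu hb (x + 2) (y - 2) = - Gu hb x y / (e1 x * e2 y) ^+ 2.
Proof.
rewrite exprMn !qhalf_sqr -[- Gu hb x y]mulN1r -cexp_ipi /Gu invfM -!cexpN -!cexpD.
by congr cexp; rewrite /ipi; field.
Qed.

Lemma Gu_sub2_add2 x y :
  Gu hb (x - 2) (y + 2) = - Gu hb x y * (e1 x * e2 y) ^+ 2.
Proof.
rewrite exprMn !qhalf_sqr -[- Gu hb x y]mulN1r -cexp_ipi /Gu -!cexpD.
by congr cexp; rewrite /ipi; field.
Qed.

Lemma GzE x y : Gz hb x y = Gu hb x y ^+ 2.
Proof. by rewrite /Gz /Gu exprMn !expr2 -!cexpD; congr cexp; field. Qed.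

Lemma GrE x y : Gr hb x y = ((e1 x * e2 y) ^+ 2)^-1.
Proof.
by rewrite exprMn !qhalf_sqr /Gr -!cexpD -cexpN; congr cexp; rewrite /ipi; field.
Qed.

Lemma ccE x y : cc hb x y = (e1 x * e2 y - (e1 x * e2 y)^-1) / (q - q^-1).
Proof. by rewrite /cc k1E k2E. Qed.

Lemma cc_sub2_add2 x y : cc hb (x - 2) (y + 2) = - cc hb x y.
Proof.
rewrite !ccE -mulNr e1_sub2 e2_add2; congr (_ / _).
by field; rewrite q_neq0 !qhalf_neq0.
Qed.

Lemma cc_add2_sub2 x y : cc hb (x + 2) (y - 2) = - cc hb x y.
Proof. by rewrite -[in RHS](addrK 2 x) -[in RHS](subrK 2 y) cc_sub2_add2 opprK. Qed.

Definition w0 : W R := fun _ _ => 0.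

Definition pbw (a1 ap am apm : W R) : U R :=
  fun z => match z with M1 => a1 | Mp => ap | Mm => am | Mpm => apm end.

Lemma pbw_eta (a : U R) : a = pbw (a M1) (a Mp) (a Mm) (a Mpm).
Proof. by apply: funext => -[]. Qed.

Lemma pbw_ext (a1 ap am apm b1 bp bm bpm : W R) :
  (forall x y, a1 x y = b1 x y) -> (forall x y, ap x y = bp x y) ->
  (forall x y, am x y = bm x y) -> (forall x y, apm x y = bpm x y) ->
  pbw a1 ap am apm = pbw b1 bp bm bpm.
Proof.
have fe (f g : W R) : (forall x y, f x y = g x y) -> f = g.
  by move=> efg; do 2 apply: funext => ?; apply: efg.
by move=> /fe-> /fe-> /fe-> /fe->.
Qed.

Lemma umul_pbw (a1 ap am apm b1 bp bm bpm : W R) :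
  umul hb (pbw a1 ap am apm) (pbw b1 bp bm bpm) =
  pbw (fun x y => a1 x y * b1 x y - am x y * bp (x + 2) (y - 2) * cc hb x y)
      (fun x y => a1 x y * bp x y + ap x y * b1 (x - 2) (y + 2)
                  - apm x y * bp x y * cc hb (x - 2) (y + 2))
      (fun x y => a1 x y * bm x y + am x y * b1 (x + 2) (y - 2)
                  - am x y * bpm (x + 2) (y - 2) * cc hb x y)
      (fun x y => a1 x y * bpm x y + apm x y * b1 x y
                  + ap x y * bm (x - 2) (y + 2) + am x y * bp (x + 2) (y - 2)
                  - apm x y * bpm x y * cc hb (x - 2) (y + 2)).
Proof.
apply: funext => z; do 2 apply: funext => ?.
by case: z; rewrite /umul /msum /= ?addr0; ring.
Qed.

Lemma uadd_pbw (a1 ap am apm b1 bp bm bpm : W R) :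
  uadd (pbw a1 ap am apm) (pbw b1 bp bm bpm) =
  pbw (fun x y => a1 x y + b1 x y) (fun x y => ap x y + bp x y)
      (fun x y => am x y + bm x y) (fun x y => apm x y + bpm x y).
Proof. by apply: funext => -[]. Qed.

Lemma uscale_pbw (c : R[i]) (a1 ap am apm : W R) :
  uscale c (pbw a1 ap am apm) =
  pbw (fun x y => c * a1 x y) (fun x y => c * ap x y)
      (fun x y => c * am x y) (fun x y => c * apm x y).
Proof. by apply: funext => -[]. Qed.

Lemma cart_pbw (f : W R) : cart f = pbw f w0 w0 w0.
Proof. by apply: funext => -[]; do 2 apply: funext => ?; rewrite /cart /= ?mul1r ?mul0r. Qed.

Lemma basis_pbw (z : mon) : @basis R z =
  match z with
  | M1 => pbw (fun _ _ => 1) w0 w0 w0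
  | Mp => pbw w0 (fun _ _ => 1) w0 w0
  | Mm => pbw w0 w0 (fun _ _ => 1) w0
  | Mpm => pbw w0 w0 w0 (fun _ _ => 1)
  end.
Proof. by case: z; apply: funext => -[]. Qed.

Lemma umulA (a b c : U R) : umul hb a (umul hb b c) = umul hb (umul hb a b) c.
Proof.
rewrite (pbw_eta a) (pbw_eta b) (pbw_eta c) !umul_pbw; apply: pbw_ext => x y.
all: by rewrite ?addrK ?subrK ?cc_sub2_add2 ?cc_add2_sub2; ring.
Qed.

Lemma umulr1 (a : U R) : umul hb a (@uone R) = a.
Proof.
rewrite (pbw_eta a) /uone cart_pbw umul_pbw.
by apply: pbw_ext => x y; rewrite /w0; ring.
Qed.

Lemma Xp_pbw : @Xp R = pbw w0 (fun _ _ => 1) w0 w0. Proof. exact: basis_pbw Mp. Qed.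
Lemma Xm_pbw : @Xm R = pbw w0 w0 (fun _ _ => 1) w0. Proof. exact: basis_pbw Mm. Qed.

Ltac to_pbw := unfold K1, K2, K1inv, K2inv, uone; rewrite ?Xp_pbw ?Xm_pbw ?cart_pbw;
  do 3 rewrite ?uscale_pbw ?uadd_pbw ?umul_pbw.

Ltac expand_cartan := rewrite /w0 ?ccE ?k1E ?k2E;
  do 4 rewrite ?addr0 ?e1_add2 ?e1_sub2 ?e2_add2 ?e2_sub2 ?qhalfN
               ?GuN ?Gu_add2_sub2 ?Gu_sub2_add2.

Hypothesis q2_neq1 : q ^+ 2 != 1.

Lemma qq_sub1_neq0 : q * q - 1 != 0.
Proof. by rewrite subr_eq0 -expr2. Qed.

Ltac nonzero := rewrite ?q_neq0 ?qhalf_neq0 ?Gu_neq0 ?qq_sub1_neq0.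

Lemma Smon_pbw z : Smon hb z =
  match z with
  | M1 => pbw (fun _ _ => 1) w0 w0 w0
  | Mp => pbw w0 (fun x y => - q * e2 y / e1 x) w0 w0
  | Mm => pbw w0 w0 (fun x y => q * e1 x / e2 y) w0
  | Mpm => pbw (fun x y => - cc hb x y) w0 w0 (fun _ _ => 1)
  end.
Proof.
case: z; rewrite /Smon; to_pbw; try done.
all: apply: pbw_ext => x y /=; expand_cartan.
all: by field; nonzero.
Qed.

Lemma Eg_pbw : Eg hb = pbw w0 (fun _ y => e2 y) w0 w0.
Proof. by rewrite /Eg; to_pbw; apply: pbw_ext => x y /=; expand_cartan; ring. Qed.

Lemma Fg_pbw : Fg hb = pbw w0 w0 (fun _ y => (e2 y)^-1) w0.
Proof. by rewrite /Fg; to_pbw; apply: pbw_ext => x y /=; expand_cartan; ring. Qed.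

Lemma msum_M1 (F : mon -> R[i]) : (forall m, m <> M1 -> F m = 0) -> msum F = F M1.
Proof. by move=> F0; rewrite /msum (F0 Mp) // (F0 Mm) // (F0 Mpm) // !addr0. Qed.

Lemma msum_delta2 (f : mon -> mon -> R[i]) z w :
  msum (fun m => msum (fun n => f m n * delta R m z * delta R n w)) = f z w.
Proof. by case: z; case: w; rewrite /msum /=; ring. Qed.

Lemma tmul_Rcartl (t : T R) z w h1 h2 g1 g2 :
  tmul hb (Rcart hb) t z w h1 h2 g1 g2 =
  Rcart hb M1 M1 h1 h2 g1 g2 * t z w h1 h2 g1 g2.
Proof.
rewrite /tmul msum_M1 => [|m]; last by case: m => // _; rewrite /msum /Rcart /=; ring.
rewrite msum_M1 => [|n]; last by case: n => // _; rewrite /msum /Rcart /=; ring.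
rewrite /= !addr0.
exact: (msum_delta2 (fun m n => Rcart hb M1 M1 h1 h2 g1 g2 * t m n h1 h2 g1 g2)).
Qed.

Lemma RmatE : Rmat hb = fun z w h1 h2 g1 g2 =>
  Rcart hb M1 M1 h1 h2 g1 g2 *
  match z, w with
  | M1, M1 => 1
  | Mp, Mm => (1 - q ^+ 2) * e2 h2 / e2 g2
  | _, _ => 0
  end.
Proof.
apply: funext => z; apply: funext => w; do 4 apply: funext => ?.
rewrite /Rmat tmul_Rcartl Eg_pbw Fg_pbw; congr (_ * _).
by case: z; case: w; rewrite /tadd /tens /tscale /uone /cart /pbw /w0 /=; ring.
Qed.

Lemma Rcart_antidiag x y : Rcart hb M1 M1 x y (- x) (- y) = Gu hb x y.
Proof. by rewrite /Rcart /Gu /= !mul1r; congr (cexp _ * cexp _); ring. Qed.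

Lemma drinfeld_u_pbw : drinfeld_u hb (Rmat hb) =
  pbw (fun x y => Gu hb x y / (e1 x * e2 y) ^+ 2) w0 w0
      (fun x y => Gu hb x y * (q - q^-1) / (e1 x * e2 y)).
Proof.
rewrite /drinfeld_u /usum4 RmatE; cbv beta.
rewrite !Smon_pbw !basis_pbw; cbv beta iota.
to_pbw; apply: pbw_ext => x y /=; rewrite ?Rcart_antidiag; expand_cartan.
all: by field; nonzero.
Qed.

Lemma antipode_drinfeld_u_pbw : antipode hb (drinfeld_u hb (Rmat hb)) =
  pbw (Gu hb) w0 w0 (fun x y => Gu hb x y * (q - q^-1) * (e1 x * e2 y)).
Proof.
rewrite drinfeld_u_pbw /antipode /usum4 !Smon_pbw; cbv beta iota.
to_pbw; apply: pbw_ext => x y /=; expand_cartan.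
all: by field; nonzero.
Qed.

Local Notation u := (drinfeld_u hb (Rmat hb)).
Local Notation Su := (antipode hb u).
Local Notation KK := (umul hb (K1 hb) (K2 hb)).
Local Notation KKinv := (umul hb (K1inv hb) (K2inv hb)).

Lemma drinfeld_uE : u = umul hb (cart (Gu hb))
  (uadd (@uone R) (uscale (1 - q ^+ 2) (umul hb (umul hb KKinv (Fg hb)) (Eg hb)))).
Proof.
rewrite drinfeld_u_pbw Eg_pbw Fg_pbw; to_pbw; apply: pbw_ext => x y /=; expand_cartan.
all: by field; nonzero.
Qed.

Lemma antipode_drinfeld_uE : Su = umul hb (cart (Gu hb))
  (uadd (@uone R) (uscale (1 - q ^+ 2) (umul hb (umul hb (Eg hb) (Fg hb)) KK))).
Proof.
rewrite antipode_drinfeld_u_pbw Eg_pbw Fg_pbw; to_pbw; apply: pbw_ext => x y /=; expand_cartan.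
all: by field; nonzero.
Qed.

Lemma drinfeld_zE : umul hb u Su = umul hb (cart (Gz hb))
  (uadd (@uone R) (uscale (1 - q ^+ 2)
     (uadd (umul hb (umul hb KK (Eg hb)) (Fg hb)) (umul hb (umul hb KKinv (Fg hb)) (Eg hb))))).
Proof.
rewrite antipode_drinfeld_u_pbw drinfeld_u_pbw Eg_pbw Fg_pbw; to_pbw.
apply: pbw_ext => x y /=; rewrite ?GzE; expand_cartan.
all: by field; nonzero.
Qed.

Lemma antipode_drinfeld_u_unit :
  exists v : U R, umul hb Su v = @uone R /\ umul hb v Su = @uone R.
Proof.
exists (pbw (fun x y => (Gu hb x y)^-1) w0 w0
           (fun x y => - (q - q^-1) / (Gu hb x y * (e1 x * e2 y)))).
rewrite antipode_drinfeld_u_pbw; split; to_pbw; apply: pbw_ext => x y /=; expand_cartan.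
all: by field; nonzero.
Qed.

Lemma drinfeld_u_Gr : u = umul hb (cart (Gr hb)) Su.
Proof.
rewrite antipode_drinfeld_u_pbw drinfeld_u_pbw; to_pbw.
apply: pbw_ext => x y /=; rewrite ?GrE; expand_cartan.
all: by field; nonzero.
Qed.

End Model.

Theorem mainTheorem2 (R : realType) (hb : R[i]) :
  q hb ^+ 2 != 1 ->
  let u := drinfeld_u hb (Rmat hb) in
  let Su := antipode hb u in
  let z := umul hb u Su in
  let a := uscale (1 - q hb ^+ 2) in
  let KK := umul hb (K1 hb) (K2 hb) in
  let KKinv := umul hb (K1inv hb) (K2inv hb) in
  (* u *)
  u = umul hb (cart (Gu hb))
        (uadd (@uone R) (a (umul hb (umul hb KKinv (Fg hb)) (Eg hb)))) /\
  (* S(u) *)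
  Su = umul hb (cart (Gu hb))
        (uadd (@uone R) (a (umul hb (umul hb (Eg hb) (Fg hb)) KK))) /\
  (* z = u S(u) *)
  z = umul hb (cart (Gz hb))
        (uadd (@uone R) (a (uadd (umul hb (umul hb KK (Eg hb)) (Fg hb))
                                (umul hb (umul hb KKinv (Fg hb)) (Eg hb))))) /\
  (* r = u S(u)^{-1}: S(u) is invertible, and u times its inverse is r *)
  (exists v : U R, umul hb Su v = @uone R /\ umul hb v Su = @uone R) /\
  (forall v : U R, umul hb Su v = @uone R -> umul hb v Su = @uone R ->
     umul hb u v = cart (Gr hb)).
Proof.
move=> q2_neq1 /=.
split; first exact: drinfeld_uE.
split; first exact: antipode_drinfeld_uE.
split; first exact: drinfeld_zE.
split; first exact: antipode_drinfeld_u_unit.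
move=> v Su_v _.
by rewrite {1}(drinfeld_u_Gr hb q2_neq1) -umulA Su_v umulr1.
Qed.
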